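(* Let $u$ be a $\rho,\lambda$-Catalan word and $v$ a $\lambda,\mu$-Catalan word. Then for every configuration of the two-stacks-in-series machine from which $uv$ can be applied, $vu$ can also be applied, and applying $uv$ and applying $vu$ yield the same configuration (same remaining input, same contents of both stacks, same output). In particular, if $u$ and $v$ are nonempty, then $uv$ is a forbidden word.
   Context: Two stacks in series: a machine with an input stream, a first stack, a second stack and an output stream, with three moves: $\rho$ moves the next element of the input onto the top of the first stack; $\lambda$ moves the top element of the first stack onto the top of the second stack; $\mu$ moves the top element of the second stack to the end of the output. A word over $\{\rho,\lambda,\mu\}$ acts on configurations by performing the moves left to right (a move can only be applied if the relevant source is nonempty). For letters $x,y$, an $x,y$-Catalan word is a word over $\{x,y\}$ with equally many $x$'s and $y$'s such that every prefix contains at least as many $x$'s as $y$'s. Order the letters by $\rho<\lambda<\mu$ and compare words lexicographically; a word $w$ over $\{\rho,\lambda,\mu\}$ is forbidden if there is another word $w'$ with $w'>w$ that has the same effect on the machine as $w$. *)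

From mathcomp Require Import all_boot.
Set Implicit Arguments. Unset Strict Implicit. Unset Printing Implicit Defensive.

Inductive move := Rho | Lam | Mu.

(* The next input element is the head of the input list; the top of each
   stack is the head of its list; the output is read left to right, new
   elements are appended at the end. *)
Record config (T : Type) := Config {
  cin : seq T; cst1 : seq T; cst2 : seq T; cout : seq T }.

Definition step {T : Type} (m : move) (c : config T) : option (config T) :=
  match m, c with
  | Rho, Config (x :: i) s1 s2 o => Some (Config i (x :: s1) s2 o)
  | Lam, Config i (x :: s1) s2 o => Some (Config i s1 (x :: s2) o)
  | Mu,  Config i s1 (x :: s2) o => Some (Config i s1 s2 (rcons o x))
  | _, _ => None
  end.

Fixpoint run {T : Type} (w : seq move) (c : config T) : option (config T) :=
  match w with
  | [::] => Some c
  | m :: w' => match step m c with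
               | Some c' => run w' c'
               | None => None
               end
  end.

Definition is_move (a : move) (m : move) : bool :=
  match a, m with
  | Rho, Rho | Lam, Lam | Mu, Mu => true
  | _, _ => false
  end.

Definition cnt (a : move) (w : seq move) : nat := count (is_move a) w.

Definition catalan (x y : move) (w : seq move) : Prop :=
  all (fun m => is_move x m || is_move y m) w /\
  cnt x w = cnt y w /\
  forall k, cnt y (take k w) <= cnt x (take k w).

Definition rank (m : move) : nat :=
  match m with Rho => 0 | Lam => 1 | Mu => 2 end.

Fixpoint lex_lt (w w' : seq move) : bool :=
  match w, w' with
  | [::], _ :: _ => true
  | _, [::] => false
  | a :: u, b :: u' =>
      (rank a < rank b) || ((rank a == rank b) && lex_lt u u')
  end.

Definition same_effect (w w' : seq move) : Prop :=
  forall c : config nat, run w c = run w' c.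

Definition forbidden (w : seq move) : Prop :=
  exists w', lex_lt w w' /\ same_effect w' w.

(* A rho,lambda-Catalan word u only moves the first [cnt Rho u] input letters
   onto the second stack (leaving the first stack and the output untouched),
   and a lambda,mu-Catalan word v only moves the top [cnt Lam v] letters of the
   first stack to the output (leaving the input and the second stack
   untouched).  Each effect is independent of the parts of the configuration
   the other word changes, so u and v commute; they also fail on exactly the
   same configurations, as each needs a fixed number of letters in a register
   the other word does not modify.  Since u starts with rho and v with lambda,
   vu is lexicographically larger than uv. *)
From mathcomp Require Import all_boot.
From mathcomp Require Import zify.
Set Implicit Arguments.

Lemma run_cat T (w1 w2 : seq move) (c : config T) :
  run (w1 ++ w2) c = if run w1 c is Some c' then run w2 c' else None.
Proof. by elim: w1 c => [|m w IH] c //=; case: (step m c). Qed.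

Lemma run_sizes {T} {w : seq move} {c c' : config T} : run w c = Some c' ->
  size (cin c') + cnt Rho w = size (cin c) /\
  size (cst1 c') + cnt Lam w = size (cst1 c) + cnt Rho w.
Proof.
elim: w c => [|m w IH] [i s1 s2 o] /=; first by case=> <-; rewrite !addn0.
case: m.
- by case: i => [|x i] //= /IH /=; rewrite /cnt /=; lia.
- by case: s1 => [|x s1] //= /IH /=; rewrite /cnt /=; lia.
- by case: s2 => [|x s2] //= /IH /=; rewrite /cnt /=; lia.
Qed.

(* [s] is the part of the first stack that [w] may pop; [s'] is what is
   left of it at the end. *)
Lemma run_Mu_free T (w : seq move) (i s : seq T) :
  cnt Mu w = 0 -> cnt Rho w <= size i ->
  (forall k, cnt Lam (take k w) <= size s + cnt Rho (take k w)) ->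
  exists s' t, size s' + cnt Lam w = size s + cnt Rho w /\
    forall s1 s2 o, run w (Config i (s ++ s1) s2 o) =
      Some (Config (drop (cnt Rho w) i) (s' ++ s1) (t ++ s2) o).
Proof.
elim: w i s => [|m w IH] i s /=.
  by move=> _ _ _; exists s, [::]; split=> [|s1 s2 o]; rewrite ?drop0.
case: m => //= w0 ri pre.
- case: i ri => [|x i] //= ri.
  have [|s' [t [/= sz eff]]] := IH i (x :: s) w0 ri.
    by move=> k; have /= := pre k.+1; lia.
  exists s', t; split=> [|s1 s2 o] /=; first lia.
  by rewrite eff.
- case: s pre => [|x s] pre; first by have /= := pre 1; rewrite take0.
  have [|s' [t [/= sz eff]]] := IH i s w0 ri.
    by move=> k; have /= := pre k.+1; lia.
  exists s', (rcons t x); split=> [|s1 s2 o] /=; first lia.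
  by rewrite add0n eff -cats1 -catA.
Qed.

(* Dually, [s] is the part of the second stack that [w] may pop. *)
Lemma run_Rho_free T (w : seq move) (s1 s : seq T) :
  cnt Rho w = 0 -> cnt Lam w <= size s1 ->
  (forall k, cnt Mu (take k w) <= size s + cnt Lam (take k w)) ->
  exists s' t, size s' + cnt Mu w = size s + cnt Lam w /\
    forall i s2 o, run w (Config i s1 (s ++ s2) o) =
      Some (Config i (drop (cnt Lam w) s1) (s' ++ s2) (o ++ t)).
Proof.
elim: w s1 s => [|m w IH] s1 s /=.
  by move=> _ _ _; exists s, [::]; split=> [|i s2 o]; rewrite ?drop0 ?cats0.
case: m => //= w0 rs pre.
- case: s1 rs => [|x s1] //= rs.
  have [|s' [t [/= sz eff]]] := IH s1 (x :: s) w0 rs.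
    by move=> k; have /= := pre k.+1; lia.
  exists s', t; split=> [|i s2 o] /=; first lia.
  by rewrite eff.
- case: s pre => [|x s] pre; first by have /= := pre 1; rewrite take0.
  have [|s' [t [/= sz eff]]] := IH s1 s w0 rs.
    by move=> k; have /= := pre k.+1; lia.
  exists s', (x :: t); split=> [|i s2 o] /=; first lia.
  by rewrite add0n eff cat_rcons.
Qed.

Lemma catalan_cnt0 x y z (w : seq move) :
  catalan x y w -> ~~ is_move x z -> ~~ is_move y z -> cnt z w = 0.
Proof.
move=> [A _] xz yz; apply/eqP; rewrite /cnt -leqn0 leqNgt -has_count -all_predC.
by apply: sub_all A => m; case: x y z m xz yz => [] [] [] [].
Qed.

Lemma catalan_RL_run {T} {u : seq move} {i : seq T} :
  catalan Rho Lam u -> cnt Rho u <= size i ->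
  exists t, forall s1 s2 o, run u (Config i s1 s2 o) =
    Some (Config (drop (cnt Rho u) i) s1 (t ++ s2) o).
Proof.
move=> Cu ri; have [_ [Eu Pu]] := Cu.
have noMu := catalan_cnt0 Mu Cu isT isT.
have [s' [t [sz eff]]] := run_Mu_free u i [::] noMu ri Pu.
have/nilP s'0 : nilp s' by move: sz; rewrite /nilp /= Eu; lia.
by exists t => s1 s2 o; rewrite eff s'0.
Qed.

Lemma catalan_LM_run {T} {v : seq move} {s1 : seq T} :
  catalan Lam Mu v -> cnt Lam v <= size s1 ->
  exists t, forall i s2 o, run v (Config i s1 s2 o) =
    Some (Config i (drop (cnt Lam v) s1) s2 (o ++ t)).
Proof.
move=> Cv rs; have [_ [Ev Pv]] := Cv.
have noRho := catalan_cnt0 Rho Cv isT isT.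
have [s' [t [sz eff]]] := run_Rho_free v s1 [::] noRho rs Pv.
have/nilP s'0 : nilp s' by move: sz; rewrite /nilp /= Ev; lia.
by exists t => i s2 o; rewrite eff s'0.
Qed.

Lemma catalan_run_commute T (u v : seq move) (c : config T) :
  catalan Rho Lam u -> catalan Lam Mu v -> run (u ++ v) c = run (v ++ u) c.
Proof.
move=> Cu Cv; have noRho := catalan_cnt0 Rho Cv isT isT.
case: c => i s1 s2 o; rewrite !run_cat.
have [ri | ri] := leqP (cnt Rho u) (size i); last first.
  have u_fails (d : config T) : size (cin d) = size i -> run u d = None.
    by move=> di; case E: (run u d) => [d'|] //; have [] := run_sizes E; lia.
  rewrite u_fails //; have [rs | rs] := leqP (cnt Lam v) (size s1).
    by have [t tv] := catalan_LM_run Cv rs; rewrite tv u_fails.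
  by case E: (run v _) => [d|] //; have /= [] := run_sizes E; lia.
have [tu ru] := catalan_RL_run Cu ri.
have [rs | rs] := leqP (cnt Lam v) (size s1).
  by have [tv rv] := catalan_LM_run Cv rs; rewrite ru rv /= rv ru.
have v_fails (d : config T) : size (cst1 d) = size s1 -> run v d = None.
  by move=> ds; case E: (run v d) => [d'|] //; have [] := run_sizes E; lia.
by rewrite ru !v_fails.
Qed.

Lemma catalan_head x y a (w : seq move) :
  catalan x y (a :: w) -> ~~ is_move x y -> is_move x a.
Proof.
move=> [/andP[xya _] [_ pre]] xy; have := pre 1.
by rewrite /cnt /= take0; case: x y a xy xya {pre} => [] [] [].
Qed.

Theorem mainTheorem3 (u v : seq move) :
  catalan Rho Lam u -> catalan Lam Mu v ->
  (forall (T : Type) (c c' : config T),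
      run (u ++ v) c = Some c' -> run (v ++ u) c = Some c') /\
  (0 < size u -> 0 < size v -> forbidden (u ++ v)).
Proof.
move=> Cu Cv; split=> [T c c'|]; first by rewrite catalan_run_commute.
case: u Cu => [|a u] // Cu; case: v Cv => [|b v] // Cv _ _.
exists ((b :: v) ++ a :: u); split=> [|c]; last exact/esym/catalan_run_commute.
have := catalan_head Cu isT; have := catalan_head Cv isT.
by case: a {Cu} => [] //; case: b {Cv}.
Qed.
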